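(* Let $h:B_4\to B_3$ be the homomorphism with $h(\sigma_1)=\sigma_1$, $h(\sigma_2)=\sigma_2$, $h(\sigma_3)=\sigma_1$. Then $\ker h$ is densely ordered by the restriction of the Dehornoy ordering of $B_4$.
   Context: $B_n$ is the Artin braid group with generators $\sigma_1,\dots,\sigma_{n-1}$. A word in the generators is $i$-positive if it contains only $\sigma_1,\dots,\sigma_i$ and their inverses, $\sigma_i$ occurs, and every occurrence of $\sigma_i$ has positive exponent; a braid is $i$-positive if some representative word is. The Dehornoy ordering is the left-invariant total order on $B_n$ whose positive cone consists of all braids that are $i$-positive for some $i$. A subgroup is densely ordered if it has no least positive element (equivalently, between any two of its elements lies a third). *)

From mathcomp Require Import all_boot.
Set Implicit Arguments. Unset Strict Implicit. Unset Printing Implicit Defensive.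

(* A letter (i, true) is sigma_i, (i, false) is sigma_i^{-1}; indices start at 1. *)
Definition letter := (nat * bool)%type.
Definition bword := seq letter.

Definition valid_word (n : nat) (w : bword) : bool :=
  all (fun l : letter => (0 < l.1) && (l.1 < n)) w.

Inductive braid_rel (n : nat) : bword -> bword -> Prop :=
| br_cancel i b : 0 < i -> i < n -> braid_rel n [:: (i, b); (i, ~~ b)] [::]
| br_far i j : 0 < i -> i < n -> 0 < j -> j < n -> (i.+1 < j) || (j.+1 < i) ->
    braid_rel n [:: (i, true); (j, true)] [:: (j, true); (i, true)]
| br_near i j : 0 < i -> i < n -> 0 < j -> j < n -> (j == i.+1) || (i == j.+1) ->
    braid_rel n [:: (i, true); (j, true); (i, true)] [:: (j, true); (i, true); (j, true)].

Inductive braid_eq (n : nat) : bword -> bword -> Prop :=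
| be_refl w : braid_eq n w w
| be_sym u v : braid_eq n u v -> braid_eq n v u
| be_trans u v w : braid_eq n u v -> braid_eq n v w -> braid_eq n u w
| be_ctx u x y v : valid_word n u -> valid_word n v -> braid_rel n x y ->
    braid_eq n (u ++ x ++ v) (u ++ y ++ v).

Definition winv (w : bword) : bword := rev (map (fun l : letter => (l.1, ~~ l.2)) w).

Definition i_positive (i : nat) (w : bword) : bool :=
  all (fun l : letter => l.1 <= i) w &&
  has (fun l : letter => l.1 == i) w &&
  all (fun l : letter => (l.1 == i) ==> l.2) w.

Definition dehornoy_pos (n : nat) (w : bword) : Prop :=
  exists (w' : bword) (i : nat), valid_word n w' /\ braid_eq n w w' /\ 0 < i /\ i_positive i w'.

Definition dehornoy_lt (n : nat) (x y : bword) : Prop := dehornoy_pos n (winv x ++ y).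

(* a subgroup H of B_n (given as a predicate on words) is densely ordered:
   it has no least positive element *)
Definition densely_ordered (n : nat) (H : bword -> Prop) : Prop :=
  ~ exists p : bword, [/\ valid_word n p, H p, dehornoy_pos n p &
      forall q : bword, valid_word n q -> H q -> dehornoy_pos n q ->
        braid_eq n p q \/ dehornoy_lt n p q].

Definition h_letter (l : letter) : letter := if l.1 == 3 then (1, l.2) else l.
Definition h_word (w : bword) : bword := map h_letter w.

Definition ker_h (w : bword) : Prop := braid_eq 3 (h_word w) [::].

(* Larue's argument gives acyclicity in B_4: under Artin's action on the free group, a braid
   word in s_1, ..., s_i in which s_i occurs only positively sends x_(i+1) to a reduced word ending
   with x_(i+1)^-1 as soon as s_i occurs, so a positive braid is never trivial.
   Let p be a least positive element of ker h. A word without s_3 is its own image under h, so p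
   is represented by a 3-positive word a s_3 c with c free of s_3. The braid
   W = s_3^-1 s_2^-1 s_3 s_1^-1 s_2 s_1 lies in ker h, its inverse is equal to the 3-positive word
   s_1^-1 s_2^-1 s_1 s_2 s_3 s_2^-1, and s_3 W = s_2^-1 s_3 s_1^-1 s_2 s_1. Hence d = c^-1 W c is a
   negative element of ker h with p d = a s_2^-1 s_3 s_1^-1 s_2 s_1 c positive: 1 < p d < p. *)

From mathcomp Require Import all_boot.
Set Implicit Arguments. Unset Strict Implicit. Unset Printing Implicit Defensive.

(** * Braid words *)

Lemma valid_word_cat n u v : valid_word n (u ++ v) = valid_word n u && valid_word n v.
Proof. exact: all_cat. Qed.

Lemma valid_word_winv n u : valid_word n (winv u) = valid_word n u.
Proof. by rewrite /valid_word /winv all_rev all_map. Qed.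

Lemma winvK : involutive winv.
Proof.
move=> w; rewrite /winv map_rev revK -map_comp -[RHS]map_id.
by apply: eq_map => -[k e] /=; rewrite negbK.
Qed.

Lemma winv_cat u v : winv (u ++ v) = winv v ++ winv u.
Proof. by rewrite /winv map_cat rev_cat. Qed.

Section BraidCalculus.
Variable n : nat.

Lemma braid_eq_ctx x y u v : braid_eq n x y -> valid_word n u -> valid_word n v ->
  braid_eq n (u ++ x ++ v) (u ++ y ++ v).
Proof.
move=> Exy Vu Vv; elim: Exy => {x y} [w|x y _|x y z _ Exy _ Eyz|u' x y v' Vu' Vv' Rxy].
- exact: be_refl.
- exact: be_sym.
- exact: be_trans Eyz.
have catE z : u ++ (u' ++ z ++ v') ++ v = (u ++ u') ++ z ++ (v' ++ v) by rewrite !catA.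
by rewrite !catE; apply: be_ctx => //; rewrite valid_word_cat ?Vu ?Vu' ?Vv ?Vv'.
Qed.

Lemma braid_eq_catl x y v : braid_eq n x y -> valid_word n v -> braid_eq n (x ++ v) (y ++ v).
Proof. by move=> Exy Vv; exact: (braid_eq_ctx Exy (isT : valid_word n [::]) Vv). Qed.

Lemma braid_eq_catr x y u : braid_eq n x y -> valid_word n u -> braid_eq n (u ++ x) (u ++ y).
Proof. by move=> Exy Vu; have := braid_eq_ctx Exy Vu (isT : valid_word n [::]); rewrite !cats0. Qed.

Lemma braid_rel_eq x y : braid_rel n x y -> braid_eq n x y.
Proof.
move=> Rxy; have := be_ctx (isT : valid_word n [::]) (isT : valid_word n [::]) Rxy.
by rewrite !cats0.
Qed.

Lemma braid_eq_cat_winv u : valid_word n u -> braid_eq n (u ++ winv u) [::].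
Proof.
elim: u => [|[i b] u IHu] /=; first by move=> _; apply: be_refl.
case/andP=> /andP [i_gt0 i_lt_n] Vu.
rewrite /winv rev_cons -cats1 -/(winv u).
apply: be_trans (_ : braid_eq n ([:: (i, b)] ++ [::] ++ [:: (i, ~~ b)]) _).
  have := braid_eq_ctx (IHu Vu) (_ : valid_word n [:: (i, b)]) (_ : valid_word n [:: (i, ~~ b)]).
  by rewrite /= -catA; apply; rewrite /= i_gt0 i_lt_n.
exact/braid_rel_eq/br_cancel.
Qed.

Lemma braid_eq_winv_cat u : valid_word n u -> braid_eq n (winv u ++ u) [::].
Proof. by have := @braid_eq_cat_winv (winv u); rewrite winvK valid_word_winv. Qed.

Lemma braid_eq_cancel u x v : valid_word n u -> valid_word n x -> valid_word n v ->
  braid_eq n (u ++ x ++ winv x ++ v) (u ++ v).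
Proof.
by move=> Vu Vx Vv; rewrite [x ++ _]catA; exact: braid_eq_ctx (braid_eq_cat_winv Vx) Vu Vv.
Qed.

Lemma braid_eq_winv_catK p d : valid_word n p -> valid_word n d ->
  braid_eq n (winv p ++ p ++ d) d.
Proof.
move=> Vp Vd; have := braid_eq_cancel (isT : valid_word n [::]) (_ : valid_word n (winv p)) Vd.
by rewrite winvK valid_word_winv; apply.
Qed.

Lemma braid_eq_cat_idr p d : valid_word n p -> valid_word n d ->
  braid_eq n p (p ++ d) -> braid_eq n d [::].
Proof.
move=> Vp Vd Ep; apply: be_trans (be_sym (braid_eq_winv_catK Vp Vd)) _.
apply: be_trans (braid_eq_catr (be_sym Ep) _) (braid_eq_winv_cat Vp).
by rewrite valid_word_winv.
Qed.

Lemma braid_eq_conj_adjacent i j : 0 < i < n -> 0 < j < n -> (j == i.+1) || (i == j.+1) ->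
  braid_eq n [:: (j, false); (i, true); (j, true)] [:: (i, true); (j, true); (i, false)].
Proof.
move=> /andP [i_gt0 i_lt_n] /andP [j_gt0 j_lt_n] adj_ij.
have Vi : valid_word n [:: (i, true)] by rewrite /= i_gt0 i_lt_n.
have Vj : valid_word n [:: (j, false)] by rewrite /= j_gt0 j_lt_n.
have Vjij : valid_word n [:: (j, false); (i, true); (j, true)].
  by rewrite /= i_gt0 i_lt_n j_gt0 j_lt_n.
apply: be_trans (_ : braid_eq n ([:: (j, false)] ++ [:: (i, true); (j, true); (i, true)]
                                    ++ [:: (i, false)]) _).
  by apply: be_sym; have := braid_eq_cancel Vjij Vi (isT : valid_word n [::]); rewrite cats0.
apply: be_trans (_ : braid_eq n ([:: (j, false)] ++ [:: (j, true); (i, true); (j, true)]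
                                    ++ [:: (i, false)]) _).
  by apply: braid_eq_ctx; rewrite //= ?i_gt0 ?i_lt_n //; exact/braid_rel_eq/br_near.
have Viji : valid_word n [:: (i, true); (j, true); (i, false)].
  by rewrite /= i_gt0 i_lt_n j_gt0 j_lt_n.
exact: braid_eq_cancel (isT : valid_word n [::]) Vj Viji.
Qed.

Lemma braid_eq_widen m u v : m <= n -> braid_eq m u v -> braid_eq n u v.
Proof.
move=> le_mn; have widen w : valid_word m w -> valid_word n w.
  by apply: sub_all => l /andP [-> /leq_trans ->].
elim=> {u v} [w|u v _|u v w _ Euv _ Evw|u x y v Vu Vv Rxy].
- exact: be_refl.
- exact: be_sym.
- exact: be_trans Evw.
apply: be_ctx; rewrite ?widen //.
by case: Rxy => *; [apply: br_cancel|apply: br_far|apply: br_near]; rewrite // (leq_trans _ le_mn).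
Qed.

End BraidCalculus.

(** * Positive braids *)

Definition i_nonneg (i : nat) (w : bword) : bool :=
  all (fun l : letter => l.1 <= i) w && all (fun l : letter => (l.1 == i) ==> l.2) w.

Lemma i_positiveE i w : i_positive i w = i_nonneg i w && has (fun l : letter => l.1 == i) w.
Proof. by rewrite /i_positive /i_nonneg andbAC. Qed.

Lemma i_nonneg_cat i u v : i_nonneg i (u ++ v) = i_nonneg i u && i_nonneg i v.
Proof. by rewrite /i_nonneg !all_cat andbACA. Qed.

Lemma i_nonneg_lt i w : all (fun l : letter => l.1 < i) w -> i_nonneg i w.
Proof.
move=> w_lt; rewrite /i_nonneg (sub_all _ w_lt) => [|l /ltnW] //.
by apply: sub_all w_lt => l /ltn_eqF ->.
Qed.

Lemma i_positive_nonneg j i w : j <= i -> i_positive j w -> i_nonneg i w.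
Proof.
rewrite leq_eqVlt i_positiveE => /orP [/eqP <- /andP [] //|lt_ji /andP [/andP [w_le_j _] _]].
by apply: i_nonneg_lt; apply: sub_all w_le_j => l /leq_ltn_trans; apply.
Qed.

Lemma i_positive_cat_max i j u v :
  i_positive i u -> i_positive j v -> i_positive (maxn i j) (u ++ v).
Proof.
move=> pos_u pos_v; rewrite i_positiveE i_nonneg_cat has_cat.
case: (leqP i j) => [le_ij|lt_ji].
  rewrite (i_positive_nonneg le_ij pos_u) (i_positive_nonneg (leqnn j) pos_v).
  by move: pos_v; rewrite i_positiveE => /andP [_ ->]; rewrite orbT.
rewrite (i_positive_nonneg (leqnn i) pos_u) (i_positive_nonneg (ltnW lt_ji) pos_v).
by move: pos_u; rewrite i_positiveE => /andP [_ ->].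
Qed.

Lemma i_positive_lt n i w : valid_word n w -> i_positive i w -> i < n.
Proof. by move=> Vw /andP [/andP [_ /hasP [l /(allP Vw) /andP [_ l_lt_n] /eqP <-]] _]. Qed.

Lemma dehornoy_pos_eq n u v : braid_eq n u v -> dehornoy_pos n v -> dehornoy_pos n u.
Proof.
by move=> Euv [w [i [Vw [Evw pos_w]]]]; exists w, i; do 2!split=> //; exact: be_trans Euv Evw.
Qed.

Lemma dehornoy_pos_cat n u v : valid_word n v ->
  dehornoy_pos n u -> dehornoy_pos n v -> dehornoy_pos n (u ++ v).
Proof.
move=> Vv [u' [i [Vu' [Eu [i_gt0 pos_u]]]]] [v' [j [Vv' [Ev [j_gt0 pos_v]]]]].
exists (u' ++ v'), (maxn i j); split; first by rewrite valid_word_cat Vu'.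
split; first exact: be_trans (braid_eq_catl Eu Vv) (braid_eq_catr Ev Vu').
by rewrite leq_max i_gt0 (i_positive_cat_max pos_u pos_v).
Qed.

Lemma dehornoy_lt_catr n p d : valid_word n p -> valid_word n d ->
  dehornoy_lt n p (p ++ d) -> dehornoy_pos n d.
Proof. by move=> Vp Vd; apply: dehornoy_pos_eq; apply: be_sym; exact: braid_eq_winv_catK. Qed.

(** * Free reduction *)

Definition linv (l : letter) : letter := (l.1, ~~ l.2).

Lemma winvE w : winv w = rev (map linv w).
Proof. by []. Qed.

Lemma linvK : involutive linv.
Proof. by case=> k e; rewrite /linv /= negbK. Qed.

Lemma eq_linv a b : (a == linv b) = (linv a == b).
Proof. by apply/eqP/eqP => [->|<-]; rewrite linvK. Qed.

Lemma neq_linv_sym a b : (a != linv b) = (b != linv a).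
Proof. by rewrite eq_linv eq_sym. Qed.

Lemma letter_neq (x y : letter) : x.1 != y.1 -> x != y.
Proof. by apply: contraNneq => ->. Qed.

Lemma letter_neq_sign (x y : letter) : x.2 != y.2 -> x != y.
Proof. by apply: contraNneq => ->. Qed.

Definition rpush (s : bword) (l : letter) : bword :=
  if s is t :: s' then (if t == linv l then s' else l :: s) else [:: l].

(* Free reduction is computed on a stack: [reduce w] is the reduced form of [w] reversed. *)
Definition reduce (w : bword) : bword := foldl rpush [::] w.

Definition reduced (s : bword) : bool := sorted (fun a b => a != linv b) s.

Lemma reduced_rpush s l : reduced s -> reduced (rpush s l).
Proof.
case: s => [|t s] //= Rs; case: ifP => [_|t_l]; first by case: s Rs => //= u s /andP [].
by rewrite /= Rs andbT neq_linv_sym t_l.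
Qed.

Lemma reduced_foldl s w : reduced s -> reduced (foldl rpush s w).
Proof. by elim: w s => //= l w IHw s Rs; apply/IHw/reduced_rpush. Qed.

Lemma reduced_reduce w : reduced (reduce w).
Proof. exact: reduced_foldl. Qed.

Lemma reduced_behead s : reduced s -> reduced (behead s).
Proof. by case: s => //= t s; apply: path_sorted. Qed.

Lemma rpushK s l : reduced s -> rpush (rpush s l) (linv l) = s.
Proof.
case: s => [|t s] Rs /=; first by rewrite linvK eqxx.
have [t_l|t_l] := eqVneq t (linv l); last by rewrite /= linvK eqxx.
rewrite -t_l; case: s Rs => [|u s] //= /andP [t_u _].
by rewrite neq_linv_sym in t_u; rewrite (negbTE t_u).
Qed.

Lemma rpush_top s l : (if s is t :: _ then t != linv l else true) -> rpush s l = l :: s.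
Proof. by case: s => //= t s /negbTE ->. Qed.

Lemma rpush_linv s l : rpush (linv l :: s) l = s.
Proof. by rewrite /rpush eqxx. Qed.

Lemma reduce_cat u v : reduce (u ++ v) = foldl rpush (reduce u) v.
Proof. by rewrite /reduce foldl_cat. Qed.

Lemma foldl_rpush_cancel s x v : reduced s ->
  foldl rpush s (x ++ winv x ++ v) = foldl rpush s v.
Proof.
elim/last_ind: x s v => [|x l IHx] s v Rs //=.
rewrite winvE map_rcons rev_rcons -winvE -cats1 -!catA /= foldl_cat /= rpushK.
  by rewrite -foldl_cat IHx.
exact: reduced_foldl.
Qed.

Lemma foldl_rpush_reduce s u : reduced s -> foldl rpush s u = foldl rpush s (rev (reduce u)).
Proof.
move=> Rs; elim/last_ind: u => [|u l IHu] //.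
rewrite -cats1 reduce_cat !foldl_cat /= IHu.
case: (reduce u) (reduced_reduce u) => [|t r] //= Rr.
have [->|_] := eqVneq t (linv l); last by rewrite [rev (l :: _)]rev_cons -cats1 foldl_cat.
by rewrite rev_cons -cats1 foldl_cat /= -{2}(linvK l) rpushK //; exact: reduced_foldl.
Qed.

Definition wsubst (f : letter -> bword) (w : bword) : bword := flatten (map f w).

Definition inv_morph (f : letter -> bword) : Prop := forall l, f (linv l) = winv (f l).

Lemma wsubst_cat f u v : wsubst f (u ++ v) = wsubst f u ++ wsubst f v.
Proof. by rewrite /wsubst map_cat flatten_cat. Qed.

Lemma wsubst_rcons f u l : wsubst f (rcons u l) = wsubst f u ++ f l.
Proof. by rewrite -cats1 wsubst_cat /wsubst /= cats0. Qed.

Lemma reduce_wsubst f u : inv_morph f -> reduce (wsubst f u) = reduce (wsubst f (rev (reduce u))).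
Proof.
move=> f_inv; elim/last_ind: u => [|u l IHu] //.
rewrite wsubst_rcons reduce_cat IHu -reduce_cat -cats1 [reduce (u ++ _)]reduce_cat /=.
case: (reduce u) (reduced_reduce u) => [|t r] Rr; first by rewrite /wsubst /= cats0.
have [->|t_l] := eqVneq t (linv l); last by rewrite /= (negbTE t_l) (rev_cons l) wsubst_rcons.
rewrite /rpush eqxx rev_cons wsubst_rcons f_inv -catA reduce_cat -{2}(winvK (f l)).
by have := foldl_rpush_cancel (winv (f l)) [::] (reduced_reduce (wsubst f (rev r))); rewrite cats0.
Qed.

Lemma reduce_wsubst_eq f u v : inv_morph f -> reduce u = reduce v ->
  reduce (wsubst f u) = reduce (wsubst f v).
Proof. by move=> f_inv Euv; rewrite reduce_wsubst // Euv -reduce_wsubst. Qed.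

Lemma reduce_wsubst_ext f g u : (forall l, reduce (f l) = reduce (g l)) ->
  reduce (wsubst f u) = reduce (wsubst g u).
Proof.
move=> Efg; elim/last_ind: u => [|u l IHu] //.
rewrite !wsubst_rcons !reduce_cat IHu.
rewrite (foldl_rpush_reduce _ (reduced_reduce _)) Efg -foldl_rpush_reduce //.
exact: reduced_reduce.
Qed.

Lemma winv_map_linv w : winv (map linv w) = map linv (winv w).
Proof. by rewrite !winvE map_rev. Qed.

Lemma wsubst_conj f w :
  wsubst (fun l => map linv (f (linv l))) w = map linv (wsubst f (map linv w)).
Proof. by elim: w => //= l w IHw; rewrite /wsubst /= map_cat -!/(wsubst _ _) IHw. Qed.

Lemma rpush_map_linv s l : map linv (rpush s l) = rpush (map linv s) (linv l).
Proof. by case: s => [|t s] //=; rewrite linvK -eq_linv; case: ifP. Qed.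

Lemma reduce_map_linv w : reduce (map linv w) = map linv (reduce w).
Proof.
elim/last_ind: w => [|w l IHw] //.
by rewrite map_rcons -!cats1 !reduce_cat IHw /= rpush_map_linv.
Qed.

Lemma reduced_map_linv s : reduced s -> reduced (map linv s).
Proof.
case: s => //= t s; elim: s t => //= u s IHs t /andP [t_u red_us].
by rewrite IHs // andbT -eq_linv linvK.
Qed.

(** * Artin's action and Larue's lemma *)

(* Artin's action of braids on the free group on x_1, x_2, ..., whose elements are again
   written as words, (k, e) standing for x_k^(+-1): s_i acts by [twist i i.+1] and s_i^-1 by
   [twist i.+1 i] conjugated by letter inversion. *)
Definition twist (a c : nat) (l : letter) : bword :=
  if l.1 == a then [:: (c, l.2)]
  else if l.1 == c then [:: (c, true); (a, l.2); (c, false)] else [:: l].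

Definition sigma_aut (s : letter) : letter -> bword :=
  if s.2 then twist s.1 s.1.+1 else fun l => map linv (twist s.1.+1 s.1 (linv l)).

Definition braid_act (b m : bword) : bword := foldl (fun m s => wsubst (sigma_aut s) m) m b.

Lemma twist_inv_morph a c : inv_morph (twist a c).
Proof. by case=> k e; rewrite /twist /linv /=; case: eqP => //; case: eqP. Qed.

Lemma sigma_aut_inv_morph s : inv_morph (sigma_aut s).
Proof.
rewrite /sigma_aut; case: s.2; first exact: twist_inv_morph.
by move=> l; rewrite linvK (twist_inv_morph _ _ l) winv_map_linv winvK.
Qed.

Lemma braid_act_rcons b s m : braid_act (rcons b s) m = wsubst (sigma_aut s) (braid_act b m).
Proof. by rewrite /braid_act foldl_rcons. Qed.

Lemma braid_act_cat b m1 m2 : braid_act b (m1 ++ m2) = braid_act b m1 ++ braid_act b m2.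
Proof. by elim: b m1 m2 => //= s b IHb m1 m2; rewrite wsubst_cat IHb. Qed.

Lemma braid_act_wsubst b m : braid_act b m = wsubst (fun l => braid_act b [:: l]) m.
Proof. by elim: m => [|l m IHm]; [elim: b | rewrite -cat1s braid_act_cat IHm]. Qed.

Lemma reduce_braid_act b m1 m2 : reduce m1 = reduce m2 ->
  reduce (braid_act b m1) = reduce (braid_act b m2).
Proof.
elim: b m1 m2 => //= s b IHb m1 m2 E12.
by apply/IHb/reduce_wsubst_eq => //; exact: sigma_aut_inv_morph.
Qed.

(* In B_4 only the letters x_1, ..., x_4 move, so each relation is checked by computation. *)
Lemma braid_rel_act x y : braid_rel 4 x y ->
  forall l, reduce (braid_act x [:: l]) = reduce (braid_act y [:: l]).
Proof.
case=> [i b|i j|i j].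
- move=> i_gt0 i_lt4 [k e].
  case: i i_gt0 i_lt4 => [|[|[|[|i]]]] // _ _; case: b; case: e;
  (do 5 (case: k => [|k]; first by vm_compute)); by vm_compute.
- move=> i_gt0 i_lt4 j_gt0 j_lt4 far_ij [k e].
  case: i i_gt0 i_lt4 far_ij => [|[|[|[|i]]]] // _ _;
  case: j j_gt0 j_lt4 => [|[|[|[|j]]]] // _ _ _;
  case: e; (do 5 (case: k => [|k]; first by vm_compute)); by vm_compute.
- move=> i_gt0 i_lt4 j_gt0 j_lt4 near_ij [k e].
  case: i i_gt0 i_lt4 near_ij => [|[|[|[|i]]]] // _ _;
  case: j j_gt0 j_lt4 => [|[|[|[|j]]]] // _ _ _;
  case: e; (do 5 (case: k => [|k]; first by vm_compute)); by vm_compute.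
Qed.

Lemma braid_eq_act u v : braid_eq 4 u v ->
  forall m, reduce (braid_act u m) = reduce (braid_act v m).
Proof.
elim=> {u v} [//|u v _ IHuv m|u v w _ IHuv _ IHvw m|u x y v _ _ Rxy m].
- by rewrite IHuv.
- by rewrite IHuv IHvw.
rewrite /braid_act !foldl_cat -/(braid_act v _) -!/(braid_act _ _); apply: reduce_braid_act.
rewrite (braid_act_wsubst x) (braid_act_wsubst y).
by apply: reduce_wsubst_ext; exact: braid_rel_act.
Qed.

Section TwistTop.
Variables a c : nat.
Hypothesis a_neq_c : a != c.

(* The top of the reduced image under [twist a c] of a reduced word ending with [o]. *)
Definition twist_top (o : option letter) (s : bword) : Prop :=
  match o with
  | None => s = [::]
  | Some (k, e) =>
    if k == c then exists r, s = [:: (c, false), (a, e) & r]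
    else if k != a then exists r, s = (k, e) :: r
    else if e then exists t r, s = t :: r /\ (t == (c, true)) || (t.1 == a)
    else exists r, s = (c, false) :: r /\
                   if r is t :: _ then (t.1 != a) && (t != (c, true)) else true
  end.

Let c_neq_a : c != a. Proof. by rewrite eq_sym. Qed.

Lemma twist_top_fixed o k e s : k != a -> k != c -> twist_top o s ->
  (forall L, o = Some L -> (k, e) != linv L) ->
  twist_top (Some (k, e)) (foldl rpush s (twist a c (k, e))).
Proof.
move=> k_a k_c top_s red_o; rewrite /twist /= !(negbTE k_a) !(negbTE k_c).
exists s; apply: rpush_top.
case: o top_s red_o => [[k' e']|-> //] /= top_s /(_ _ erefl) red_ke.
case: ifP top_s => [_ [r ->]|_]; first by apply: letter_neq; rewrite /= eq_sym.
case: ifP => [_ [r ->]|_]; first by rewrite neq_linv_sym.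
case: e' red_ke => _; last by case=> r [-> _]; apply: letter_neq; rewrite /= eq_sym.
case=> t [r [-> /orP [/eqP ->|/eqP t_a]]]; apply: letter_neq; rewrite /= eq_sym //.
by rewrite t_a.
Qed.

Lemma twist_top_a o e s : twist_top o s -> (forall L, o = Some L -> (a, e) != linv L) ->
  twist_top (Some (a, e)) (foldl rpush s (twist a c (a, e))).
Proof.
move=> top_s red_o; rewrite /twist /= eqxx (negbTE a_neq_c) /=.
case: o top_s red_o => [[k' e']|-> _] /=; last first.
  by case: e; [exists (c, true), [::]; rewrite eqxx | exists [::]].
have cf_top : ((c, false).1 != a) && ((c, false) != (c, true)).
  by rewrite /= c_neq_a; apply: letter_neq_sign.
case: ifP => [_ [r ->]|/negbT k'_c]; last case: ifP => [k'_a [r ->]|/negbFE/eqP k'_a].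
- case: e => _.
    by exists (a, e'), r; rewrite /= !eqxx orbT.
  by exists [:: (c, false), (a, e') & r]; rewrite rpush_top ?cf_top //; apply: letter_neq_sign.
- have k'_top b : (k', e') != linv (c, b) by apply: letter_neq; rewrite /= k'_c.
  case: e => _; first by exists (c, true), [:: (k', e') & r]; rewrite rpush_top ?eqxx.
  by exists [:: (k', e') & r]; rewrite rpush_top //= k'_a; split => //; apply: letter_neq.
rewrite {}k'_a; case: e'; case: e => top_s /(_ _ erefl) red_ae //;
  try by rewrite /linv eqxx in red_ae.
  case: top_s => t [r [-> top_t]]; exists (c, true), (t :: r); rewrite rpush_top ?eqxx //.
  by case/orP: top_t => [/eqP ->|/eqP t_a]; [apply: letter_neq_sign|apply: letter_neq; rewrite t_a].
case: top_s => r [-> _]; exists [:: (c, false) & r].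
by rewrite rpush_top ?cf_top //; apply: letter_neq_sign.
Qed.

Lemma twist_top_c o e s : twist_top o s -> (forall L, o = Some L -> (c, e) != linv L) ->
  twist_top (Some (c, e)) (foldl rpush s (twist a c (c, e))).
Proof.
move=> top_s red_o; rewrite /twist /= (negbTE c_neq_a) !eqxx.
suff top1 : (if rpush s (c, true) is t :: _ then t != linv (a, e) else true) : bool.
  by exists (rpush s (c, true)); rewrite /= (rpush_top top1) rpush_top //; apply: letter_neq.
have top_c t r : t != (c, false) -> rpush (t :: r) (c, true) = [:: (c, true), t & r].
  by move=> t_c; rewrite rpush_top.
case: o top_s red_o => [[k' e']|-> _] /=; last by apply: letter_neq.
case: ifP => [/eqP -> [r ->]|/negbT k'_c]; last case: ifP => [k'_a [r ->]|/negbFE/eqP ->].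
- move=> /(_ _ erefl) red_ce; rewrite /= eqxx; apply: letter_neq_sign.
  by case: e e' red_ce => [] [] //=; rewrite eqxx.
- by move=> _; rewrite top_c; apply: letter_neq.
case: e' => /= [[t [r [-> top_t]]]|[r [-> head_r]]] _.
  rewrite top_c; first by apply: letter_neq.
  by case/orP: top_t => [/eqP ->|/eqP t_a]; [apply: letter_neq_sign|apply: letter_neq; rewrite t_a].
rewrite (rpush_linv r (c, true)); case: r head_r => // t r /andP [t_a _].
exact: letter_neq.
Qed.

Lemma twist_top_rpush o l s : twist_top o s -> (forall L, o = Some L -> l != linv L) ->
  twist_top (Some l) (foldl rpush s (twist a c l)).
Proof.
case: l => k e; have [->|k_a] := eqVneq k a; first exact: twist_top_a.
have [->|k_c] := eqVneq k c; first exact: twist_top_c.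
exact: twist_top_fixed.
Qed.

Lemma twist_top_reduce T : reduced T ->
  twist_top (ohead T) (reduce (wsubst (twist a c) (rev T))).
Proof.
elim: T => [|l T IHT] // red_lT.
rewrite rev_cons wsubst_rcons reduce_cat; apply: twist_top_rpush.
  exact: IHT (reduced_behead red_lT).
by case: T red_lT {IHT} => //= t T /andP [l_t _] _ [<-].
Qed.

Lemma twist_top_fixed_letter t T : reduced (t :: T) -> t.1 != a -> t.1 != c ->
  ohead (reduce (wsubst (twist a c) (rev (t :: T)))) = Some t.
Proof.
move=> red_tT t_a t_c; have := twist_top_reduce red_tT.
by case: t t_a t_c {red_tT} => k e /= /negbTE -> /negbTE ->; case=> r ->.
Qed.

Lemma twist_top_c_head e T : reduced ((c, e) :: T) ->
  ohead (reduce (wsubst (twist a c) (rev ((c, e) :: T)))) = Some (c, false).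
Proof. by move/twist_top_reduce; rewrite /= eqxx => -[r ->]. Qed.

End TwistTop.

Lemma sigma_aut_top_fixed k e t T : t.1 != k -> t.1 != k.+1 -> reduced (t :: T) ->
  ohead (reduce (wsubst (sigma_aut (k, e)) (rev (t :: T)))) = Some t.
Proof.
move=> t_k t_k1 red_tT; have k_k1 : k != k.+1 by rewrite neq_ltn ltnSn.
case: e; first exact: twist_top_fixed_letter.
rewrite /sigma_aut /= wsubst_conj reduce_map_linv map_rev /=.
have := @twist_top_fixed_letter k.+1 k _ (linv t) (map linv T).
rewrite eq_sym => /(_ k_k1 (reduced_map_linv red_tT) t_k1 t_k).
by case: (reduce _) => //= u r [->]; rewrite linvK.
Qed.

(* Larue's lemma; the head of the stack [reduce m] is the last letter of the reduced word. *)
Lemma braid_act_top i w : i_nonneg i w ->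
  ohead (reduce (braid_act w [:: (i.+1, true)])) =
  Some (i.+1, ~~ has (fun l : letter => l.1 == i) w).
Proof.
elim/last_ind: w => [|w [k e] IHw] //.
rewrite /i_nonneg !all_rcons has_rcons /= => /andP [/andP [k_le_i w_le_i] /andP [k_pos w_pos]].
rewrite braid_act_rcons reduce_wsubst; last exact: sigma_aut_inv_morph.
move: (IHw); rewrite /i_nonneg w_le_i w_pos => /(_ isT).
case: (reduce _) (reduced_reduce (braid_act w [:: (i.+1, true)])) => // t T red_tT [t_eq].
rewrite {t}t_eq in red_tT *; have [k_i|k_neq_i] := eqVneq k i.
  move: k_pos; rewrite k_i eqxx /= => ->.
  by apply: twist_top_c_head => //; rewrite neq_ltn ltnSn.
by apply: sigma_aut_top_fixed; rewrite //= ?eqSS eq_sym ?ltn_eqF // ltn_neqAle k_neq_i.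
Qed.

Lemma i_positive_nontrivial i w : i_positive i w -> ~ braid_eq 4 w [::].
Proof.
rewrite i_positiveE => /andP [nonneg_w has_i] w_eq1.
by have := braid_act_top nonneg_w; rewrite has_i (braid_eq_act w_eq1).
Qed.

Lemma dehornoy_pos_nontrivial u : dehornoy_pos 4 u -> ~ braid_eq 4 u [::].
Proof.
move=> [w [i [_ [Euw [_ pos_w]]]]] Eu; apply: (i_positive_nontrivial pos_w).
exact: be_trans (be_sym Euw) Eu.
Qed.

Lemma dehornoy_pos_winv u : valid_word 4 u -> dehornoy_pos 4 (winv u) ->
  ~ dehornoy_pos 4 u /\ ~ braid_eq 4 u [::].
Proof.
move=> Vu pos_winv; split=> [pos_u|Eu].
  exact: dehornoy_pos_nontrivial (dehornoy_pos_cat Vu pos_winv pos_u) (braid_eq_winv_cat Vu).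
apply: (dehornoy_pos_nontrivial pos_winv); apply: be_trans _ (braid_eq_winv_cat Vu); apply: be_sym.
by have := braid_eq_catr Eu (_ : valid_word 4 (winv u)); rewrite cats0 valid_word_winv; apply.
Qed.

(** * The kernel of h *)

Lemma h_word_cat u v : h_word (u ++ v) = h_word u ++ h_word v.
Proof. exact: map_cat. Qed.

Lemma h_word_winv w : h_word (winv w) = winv (h_word w).
Proof.
rewrite /h_word /winv map_rev -!map_comp; congr rev; apply: eq_map => -[k e].
by rewrite /h_letter /=; case: ifP.
Qed.

Lemma valid_h_word w : valid_word 4 w -> valid_word 3 (h_word w).
Proof.
rewrite /valid_word /h_word all_map; apply: sub_all => -[k e] /andP [k_gt0 k_lt4] /=.
by rewrite /h_letter /=; case: eqVneq => [//|k_neq3]; rewrite /= k_gt0 ltn_neqAle k_neq3 -ltnS.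
Qed.

Lemma h_word_id w : all (fun l : letter => l.1 < 3) w -> h_word w = w.
Proof.
move=> w_lt3; rewrite -[RHS]map_id; apply/eq_in_map => l /(allP w_lt3) /ltn_eqF.
by rewrite /h_letter => ->.
Qed.

Lemma h_braid_rel x y : braid_rel 4 x y -> braid_eq 3 (h_word x) (h_word y).
Proof.
case=> [i b i_gt0 i_lt4|i j i_gt0 i_lt4 j_gt0 j_lt4 far_ij|i j i_gt0 i_lt4 j_gt0 j_lt4 near_ij].
- apply: braid_rel_eq; rewrite /h_word /h_letter /=.
  by case: eqVneq => [_|i_neq3]; apply: br_cancel; rewrite // ltn_neqAle i_neq3 -ltnS.
- case: i i_gt0 i_lt4 far_ij => [|[|[|[|i]]]] // _ _;
  by case: j j_gt0 j_lt4 => [|[|[|[|j]]]] // _ _ _; exact: be_refl.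
case: i i_gt0 i_lt4 near_ij => [|[|[|[|i]]]] // _ _;
by case: j j_gt0 j_lt4 => [|[|[|[|j]]]] // _ _ _; apply: braid_rel_eq; apply: br_near.
Qed.

Lemma h_braid_eq u v : braid_eq 4 u v -> braid_eq 3 (h_word u) (h_word v).
Proof.
elim=> {u v} [w|u v _|u v w _ Euv _ Evw|u x y v Vu Vv Rxy].
- exact: be_refl.
- exact: be_sym.
- exact: be_trans Evw.
by rewrite !h_word_cat; apply: braid_eq_ctx; rewrite ?valid_h_word //; exact: h_braid_rel.
Qed.

Lemma ker_h_braid_eq u v : braid_eq 4 u v -> ker_h u -> ker_h v.
Proof. by move/h_braid_eq => Euv; apply: be_trans; apply: be_sym. Qed.

Lemma ker_h_cat u v : valid_word 4 v -> ker_h u -> ker_h v -> ker_h (u ++ v).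
Proof.
move=> Vv Ku Kv; rewrite /ker_h h_word_cat.
exact: be_trans (braid_eq_catl Ku (valid_h_word Vv)) Kv.
Qed.

Lemma ker_h_conj c x : valid_word 4 c -> ker_h x -> ker_h (winv c ++ x ++ c).
Proof.
move=> Vc Kx; rewrite /ker_h !h_word_cat h_word_winv.
apply: be_trans (braid_eq_ctx Kx _ (valid_h_word Vc)) _.
  by rewrite valid_word_winv valid_h_word.
exact: braid_eq_winv_cat (valid_h_word Vc).
Qed.

Lemma ker_h_i_positive i w : valid_word 4 w -> ker_h w -> i_positive i w -> i = 3.
Proof.
move=> Vw Kw pos_w; have := i_positive_lt Vw pos_w.
rewrite ltnS leq_eqVlt => /orP [/eqP //|i_lt3].
have w_lt3 : all (fun l : letter => l.1 < 3) w.
  by case/andP: pos_w => /andP [w_le_i _] _; apply: sub_all w_le_i => l /leq_ltn_trans; apply.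
case: (i_positive_nontrivial pos_w); apply: (braid_eq_widen (isT : 3 <= 4)).
by rewrite -(h_word_id w_lt3).
Qed.

Lemma i_positive_last i w : i_positive i w ->
  exists a c, [/\ w = a ++ (i, true) :: c, i_nonneg i a & all (fun l : letter => l.1 < i) c].
Proof.
elim/last_ind: w => [//|w [k e] IHw].
rewrite i_positiveE /i_nonneg !all_rcons has_rcons /=.
case/andP=> /andP [/andP [k_le_i w_le_i] /andP [k_pos w_pos]].
have [k_i _|k_neq_i /= has_w] := eqVneq k i.
  move: k_pos; rewrite k_i eqxx /= => e_true.
  by exists w, [::]; rewrite cats1 /i_nonneg w_le_i w_pos e_true.
have [|a [c [-> nonneg_a c_lt_i]]] := IHw; first by rewrite i_positiveE /i_nonneg w_le_i w_pos.
exists a, (rcons c (k, e)); split=> //; first by rewrite rcons_cat.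
by rewrite all_rcons c_lt_i ltn_neqAle k_neq_i k_le_i.
Qed.

Definition kerW : bword := [:: (3, false); (2, false); (3, true); (1, false); (2, true); (1, true)].

Lemma ker_h_kerW : ker_h kerW.
Proof.
apply: be_trans (@braid_eq_cancel 3 [:: (1, false); (2, false)] [:: (1, true)]
                   [:: (2, true); (1, true)] isT isT isT) _.
exact: (@braid_eq_winv_cat 3 [:: (2, true); (1, true)]).
Qed.

Lemma dehornoy_pos_winv_conj_kerW c : valid_word 4 c -> all (fun l : letter => l.1 < 3) c ->
  dehornoy_pos 4 (winv (winv c ++ kerW ++ c)).
Proof.
move=> Vc c_lt3.
have winv_c_lt3 : all (fun l : letter => l.1 < 3) (winv c) by rewrite /winv all_rev all_map.
exists (winv c ++ [:: (1, false); (2, false); (1, true); (2, true); (3, true); (2, false)] ++ c), 3.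
rewrite !winv_cat winvK -catA; split; first by rewrite !valid_word_cat valid_word_winv Vc.
split.
  apply: braid_eq_ctx => //; last by rewrite valid_word_winv.
  exact: (@braid_eq_ctx 4 _ _ [:: (1, false); (2, false); (1, true)] [::]
            (@braid_eq_conj_adjacent 4 2 3 isT isT isT)).
split=> //; rewrite i_positiveE !i_nonneg_cat (i_nonneg_lt winv_c_lt3) (i_nonneg_lt c_lt3).
by rewrite has_cat orbT.
Qed.

Lemma dehornoy_pos_kerW_shift a c : valid_word 4 a -> valid_word 4 c ->
  i_nonneg 3 a -> all (fun l : letter => l.1 < 3) c ->
  dehornoy_pos 4 ((a ++ (3, true) :: c) ++ winv c ++ kerW ++ c).
Proof.
move=> Va Vc nonneg_a c_lt3.
set s3kerW := [:: (2, false); (3, true); (1, false); (2, true); (1, true)].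
exists (a ++ s3kerW ++ c), 3; split; first by rewrite !valid_word_cat Va Vc.
split; last first.
  split=> //; rewrite i_positiveE !i_nonneg_cat nonneg_a (i_nonneg_lt c_lt3) /=.
  by rewrite has_cat orbT.
have -> : (a ++ (3, true) :: c) ++ winv c ++ kerW ++ c =
          (a ++ [:: (3, true)]) ++ c ++ winv c ++ kerW ++ c by rewrite -!catA.
apply: be_trans (braid_eq_cancel _ Vc _) _; rewrite ?valid_word_cat ?Va ?Vc //.
by rewrite -catA; apply: (@braid_eq_cancel 4 a [:: (3, true)] (s3kerW ++ c)) => //.
Qed.

Theorem proposition3p7 : densely_ordered 4 ker_h.
Proof.
case=> p [Vp Kp [w [i [Vw [Epw [_ pos_w]]]]] p_min].
have i_eq3 := ker_h_i_positive Vw (ker_h_braid_eq Epw Kp) pos_w; subst i.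
have [a [c [w_eq nonneg_a c_lt3]]] := i_positive_last pos_w.
move: Vw; rewrite w_eq valid_word_cat /= => /andP [Va Vc].
set d := winv c ++ kerW ++ c.
have Vd : valid_word 4 d by rewrite !valid_word_cat valid_word_winv Vc.
have [not_pos_d not_triv_d] := dehornoy_pos_winv Vd (dehornoy_pos_winv_conj_kerW Vc c_lt3).
case: (p_min (p ++ d)).
- by rewrite valid_word_cat Vp.
- exact: ker_h_cat Vd Kp (ker_h_conj Vc ker_h_kerW).
- apply: dehornoy_pos_eq (braid_eq_catl Epw Vd) _.
  by rewrite w_eq; apply: dehornoy_pos_kerW_shift.
- by move/(braid_eq_cat_idr Vp Vd).
- by move/(dehornoy_lt_catr Vp Vd).
Qed.
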